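(* Let $G$ and $H$ be graphs without isolated vertices. Then $G$ and $H$ are isomorphic as graphs if and only if $B(G)$ and $B(H)$ are isomorphic as $\mathbb{Z}_2$-posets, i.e. there is an order isomorphism $B(G)\to B(H)$ commuting with the involutions.
   Context: A graph $G$ is a set $V(G)$ together with a symmetric subset $E(G) \subset V(G)\times V(G)$ (undirected, no multiple edges, loops allowed; graphs may be infinite). For $v \in V(G)$, $N(v)=\{w : (v,w)\in E(G)\}$; $v$ is isolated if $N(v)=\emptyset$. The box complex $B(G)$ is the poset of all pairs $(\sigma,\tau)$ of non-empty (possibly infinite) subsets of $V(G)$ with $\sigma\times\tau\subset E(G)$, ordered by $(\sigma,\tau)\le(\sigma',\tau')$ iff $\sigma\subset\sigma'$ and $\tau\subset\tau'$, and equipped with the involution $(\sigma,\tau)\leftrightarrow(\tau,\sigma)$. *)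

Set Implicit Arguments.

(* A graph: a vertex type with a symmetric adjacency relation
   (undirected, no multiple edges, loops allowed, possibly infinite). *)
Record graph := Graph {
  V : Type;
  adj : V -> V -> Prop;
  adj_sym : forall v w, adj v w -> adj w v
}.

Definition isolated (G : graph) (v : V G) : Prop := ~ exists w, adj G v w.

Definition no_isolated (G : graph) : Prop := forall v : V G, ~ isolated G v.

Definition bijective {A B : Type} (f : A -> B) : Prop :=
  exists g : B -> A, (forall x, g (f x) = x) /\ (forall y, f (g y) = y).

Definition graph_iso (G H : graph) : Prop :=
  exists phi : V G -> V H, bijective phi /\
    (forall v w, adj G v w <-> adj H (phi v) (phi w)).

(* The cells of the box complex B(G): pairs (sigma, tau) of non-empty
   (possibly infinite) subsets with sigma x tau contained in E(G). *)
Definition is_box_cell (G : graph) (p : (V G -> Prop) * (V G -> Prop)) : Prop :=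
  (exists x, fst p x) /\ (exists y, snd p y) /\
  (forall x y, fst p x -> snd p y -> adj G x y).

Definition box (G : graph) : Type := { p | is_box_cell G p }.

Definition box_le (G : graph) (a b : box G) : Prop :=
  (forall x, fst (proj1_sig a) x -> fst (proj1_sig b) x) /\
  (forall x, snd (proj1_sig a) x -> snd (proj1_sig b) x).

Lemma box_inv_cell (G : graph) (a : box G) :
  is_box_cell G (snd (proj1_sig a), fst (proj1_sig a)).
Proof.
  destruct a as [[s t] [Hs [Ht He]]]; simpl in *.
  split; [exact Ht | split; [exact Hs |]].
  intros x y Hx Hy; apply adj_sym; apply He; assumption.
Qed.

Definition box_inv (G : graph) (a : box G) : box G :=
  exist _ (snd (proj1_sig a), fst (proj1_sig a)) (box_inv_cell a).

Definition z2_poset_iso (G H : graph) : Prop :=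
  exists f : box G -> box H, bijective f /\
    (forall a b, box_le a b <-> box_le (f a) (f b)) /\
    (forall a, f (box_inv a) = box_inv (f a)).

From Stdlib Require Import Classical ClassicalEpsilon FunctionalExtensionality
  PropExtensionality ProofIrrelevance.
Set Implicit Arguments.

(* The minimal cells of B(G) are the cells ({x},{y}) with x ~ y, i.e. the arcs
   of G, and the involution reverses them.  Two arcs share their tail or their
   head exactly when they have an upper bound d whose down-set is {a, b, d}, so
   a Z_2-poset isomorphism induces a bijection between the arcs of G and H that
   commutes with reversal and preserves this sharing relation.  Such a bijection
   maps the out-star of every vertex x onto the out-star or the in-star of some
   vertex phi x.  Choosing out-stars whenever possible, the choice propagates
   along edges, so every arc (x, y) is sent to (phi x, phi y) or (phi y, phi x),
   and phi is a graph isomorphism.  Isolated vertices are invisible in B(G),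
   whence the hypothesis. *)

Section Arcs.
Variable G : graph.

Definition arc : Type := { p : V G * V G | adj G (fst p) (snd p) }.
Definition tail (a : arc) : V G := fst (proj1_sig a).
Definition head (a : arc) : V G := snd (proj1_sig a).

Definition arc_rev (a : arc) : arc :=
  exist _ (head a, tail a) (adj_sym G _ _ (proj2_sig a)).

Lemma arc_eq (a b : arc) : tail a = tail b -> head a = head b -> a = b.
Proof.
  destruct a as [[x y] h], b as [[x' y'] h']; unfold tail, head; simpl.
  intros -> ->. f_equal. apply proof_irrelevance.
Qed.

Lemma arc_rev_involutive (a : arc) : arc_rev (arc_rev a) = a.
Proof. apply arc_eq; reflexivity. Qed.

Lemma arc_rev_fixed (a : arc) : arc_rev a = a -> head a = tail a.
Proof. intro e. change (tail (arc_rev a) = tail a). now rewrite e. Qed.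

Definition share (a b : arc) : Prop := tail a = tail b \/ head a = head b.

Lemma share_pair_tail (a a' c : arc) : a <> a' -> tail a = tail a' ->
  share c a -> share c a' -> tail c = tail a.
Proof.
  intros ne et [e | e] [e' | e']; try congruence.
  exfalso. apply ne, arc_eq; congruence.
Qed.

Lemma share_pair_head (a a' c : arc) : a <> a' -> head a = head a' ->
  share c a -> share c a' -> head c = head a.
Proof.
  intros ne eh [e | e] [e' | e']; try congruence.
  exfalso. apply ne, arc_eq; congruence.
Qed.

Definition out_star (x : V G) (a : arc) : Prop := tail a = x.
Definition in_star (x : V G) (a : arc) : Prop := head a = x.

Lemma out_star_inhabited : no_isolated G -> forall x, exists a, out_star x a.
Proof.
  intros hG x. destruct (NNPP _ (hG x)) as [y h].
  exists (exist _ (x, y) h). reflexivity.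
Qed.

End Arcs.

Section ArcBijection.
Variables G H : graph.
Variable F : arc G -> arc H.
Hypothesis F_inj : forall a b, F a = F b -> a = b.
Hypothesis F_surj : forall b, exists a, F a = b.
Hypothesis F_rev : forall a, F (arc_rev a) = arc_rev (F a).
Hypothesis F_share : forall a b, share a b <-> share (F a) (F b).
Hypothesis hG : no_isolated G.

Definition maps_onto (P : arc G -> Prop) (Q : arc H -> Prop) : Prop :=
  (forall a, P a -> Q (F a)) /\ (forall b, Q b -> exists a, P a /\ F a = b).

Lemma maps_onto_reflect P Q a : maps_onto P Q -> Q (F a) -> P a.
Proof.
  intros [_ onto] q. destruct (onto _ q) as [a' [p e]].
  rewrite <- (F_inj e). exact p.
Qed.

Lemma out_star_image_out x a a' : out_star x a -> out_star x a' -> a <> a' ->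
  tail (F a) = tail (F a') -> maps_onto (out_star x) (out_star (tail (F a))).
Proof.
  intros ha ha' ne e. split.
  - intros c hc. apply (share_pair_tail (a' := F a')); trivial.
    + intro eF. exact (ne (F_inj eF)).
    + apply F_share. left. congruence.
    + apply F_share. left. congruence.
  - intros b hb. destruct (F_surj b) as [c <-]. exists c. split; [|reflexivity].
    unfold out_star. rewrite <- ha. apply (share_pair_tail (a' := a')); trivial.
    + congruence.
    + apply F_share. left. exact hb.
    + apply F_share. left. congruence.
Qed.

Lemma out_star_image_in x a a' : out_star x a -> out_star x a' -> a <> a' ->
  head (F a) = head (F a') -> maps_onto (out_star x) (in_star (head (F a))).
Proof.
  intros ha ha' ne e. split.
  - intros c hc. apply (share_pair_head (a' := F a')); trivial.
    + intro eF. exact (ne (F_inj eF)).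
    + apply F_share. left. congruence.
    + apply F_share. left. congruence.
  - intros b hb. destruct (F_surj b) as [c <-]. exists c. split; [|reflexivity].
    unfold out_star. rewrite <- ha. apply (share_pair_tail (a' := a')); trivial.
    + congruence.
    + apply F_share. right. exact hb.
    + apply F_share. right. congruence.
Qed.

Lemma unique_out_arc_image x a : out_star x a -> (forall c, out_star x c -> c = a) ->
  maps_onto (out_star x) (out_star (tail (F a))) \/
  maps_onto (out_star x) (in_star (head (F a))).
Proof.
  intros ha uniq.
  assert (singleton : forall Q, (forall b, Q b <-> b = F a) -> maps_onto (out_star x) Q).
  { intros Q hQ. split.
    - intros c hc. apply hQ. now rewrite (uniq c hc).
    - intros b hb. exists a. split; [exact ha | symmetry; apply hQ, hb]. }
  destruct (classic (forall b, out_star (tail (F a)) b -> b = F a)) as [only | other].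
  - left. apply singleton. intro b. split; [apply only | now intros ->].
  - right. apply singleton. intro b. split; [|now intros ->]. intro hb.
    apply not_all_ex_not in other. destruct other as [b0 other].
    apply imply_to_and in other. destruct other as [tb0 nb0].
    (* The preimages of b0 and b both end at head a, so b0 and b share an
       endpoint, which forces one of them to be F a. *)
    apply NNPP. intro nb.
    destruct (F_surj b0) as [c0 <-], (F_surj b) as [c <-].
    assert (hc0 : head c0 = head a).
    { destruct (proj2 (F_share c0 a) (or_introl tb0)) as [t | h]; [|exact h].
      exfalso. apply nb0. f_equal. apply uniq. unfold out_star. congruence. }
    assert (hc : head c = head a).
    { destruct (proj2 (F_share c a) (or_intror hb)) as [t | h]; [|exact h].
      exfalso. apply nb. f_equal. apply uniq. unfold out_star. congruence. }
    destruct (proj1 (F_share c0 c) (or_intror (eq_trans hc0 (eq_sym hc)))) as [t | h].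
    + apply nb. apply arc_eq; [unfold out_star in tb0; congruence | exact hb].
    + apply nb0. apply arc_eq; [exact tb0 | unfold in_star in hb; congruence].
Qed.

Lemma out_star_image x : exists z,
  maps_onto (out_star x) (out_star z) \/ maps_onto (out_star x) (in_star z).
Proof.
  destruct (out_star_inhabited hG x) as [a ha].
  destruct (classic (exists a', out_star x a' /\ a' <> a)) as [[a' [ha' ne]] | none].
  - destruct (proj1 (F_share a' a) (or_introl (eq_trans ha' (eq_sym ha)))) as [e | e].
    + exists (tail (F a')). left. exact (out_star_image_out ha' ha ne e).
    + exists (head (F a')). right. exact (out_star_image_in ha' ha ne e).
  - assert (uniq : forall c, out_star x c -> c = a).
    { intros c hc. apply NNPP. intro ne. apply none. eauto. }
    destruct (unique_out_arc_image ha uniq); eauto.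
Qed.

Definition keeps_orientation (x : V G) : Prop :=
  exists z, maps_onto (out_star x) (out_star z).

Lemma keeps_orientation_head a :
  keeps_orientation (tail a) -> keeps_orientation (head a).
Proof.
  intros [z Mx].
  destruct (out_star_image (head a)) as [z' [My | My]]; [now exists z'|].
  exists (head (F a)).
  assert (ends_at_tail : forall c, head (F c) = z -> head c = tail a).
  { intros c hc. apply (maps_onto_reflect (arc_rev c) Mx).
    unfold out_star. rewrite F_rev. exact hc. }
  assert (ez : z' = z).
  { pose proof (proj1 My (arc_rev a) eq_refl) as h. unfold in_star in h.
    rewrite F_rev in h. change (tail (F a) = z') in h.
    rewrite <- h. exact (proj1 Mx a eq_refl). }
  subst z'. split.
  - intros c hc. replace c with (arc_rev a).
    + rewrite F_rev. reflexivity.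
    + apply arc_eq; [symmetry; exact hc | symmetry; apply ends_at_tail, (proj1 My c hc)].
  - intros b hb. destruct (F_surj b) as [c <-]. exists c. split; [|reflexivity].
    assert (hs : share (F c) (F (arc_rev a))).
    { left. rewrite F_rev. exact hb. }
    apply F_share in hs. destruct hs as [t | h]; [exact t|].
    apply (maps_onto_reflect _ My). unfold in_star.
    change (tail (arc_rev (F c)) = z). rewrite <- F_rev.
    exact (proj1 Mx (arc_rev c) h).
Qed.

Lemma vertex_map_exists x : exists z,
  (keeps_orientation x -> maps_onto (out_star x) (out_star z)) /\
  (~ keeps_orientation x -> maps_onto (out_star x) (in_star z)).
Proof.
  destruct (classic (keeps_orientation x)) as [k | k].
  - destruct k as [z Mx]. exists z. split; [auto | intro n; exfalso; apply n; now exists z].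
  - destruct (out_star_image x) as [z [Mx | Mx]].
    + exfalso. apply k. now exists z.
    + exists z. split; [contradiction | auto].
Qed.

Definition vertex_map (x : V G) : V H :=
  proj1_sig (constructive_indefinite_description _ (vertex_map_exists x)).

Lemma vertex_map_spec x :
  (keeps_orientation x -> maps_onto (out_star x) (out_star (vertex_map x))) /\
  (~ keeps_orientation x -> maps_onto (out_star x) (in_star (vertex_map x))).
Proof. exact (proj2_sig (constructive_indefinite_description _ (vertex_map_exists x))). Qed.

Lemma vertex_map_keeps a : keeps_orientation (tail a) ->
  tail (F a) = vertex_map (tail a) /\ head (F a) = vertex_map (head a).
Proof.
  intro k. split.
  - exact (proj1 (proj1 (vertex_map_spec (tail a)) k) a eq_refl).
  - pose proof (proj1 (proj1 (vertex_map_spec (head a)) (keeps_orientation_head a k))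
                  (arc_rev a) eq_refl) as h.
    rewrite F_rev in h. exact h.
Qed.

Lemma vertex_map_flips a : ~ keeps_orientation (tail a) ->
  tail (F a) = vertex_map (head a) /\ head (F a) = vertex_map (tail a).
Proof.
  intro k.
  assert (k' : ~ keeps_orientation (head a)).
  { intro h. exact (k (keeps_orientation_head (arc_rev a) h)). }
  split.
  - pose proof (proj1 (proj2 (vertex_map_spec (head a)) k') (arc_rev a) eq_refl) as h.
    rewrite F_rev in h. exact h.
  - exact (proj1 (proj2 (vertex_map_spec (tail a)) k) a eq_refl).
Qed.

Lemma vertex_map_ends a :
  (tail (F a) = vertex_map (tail a) /\ head (F a) = vertex_map (head a)) \/
  (tail (F a) = vertex_map (head a) /\ head (F a) = vertex_map (tail a)).
Proof.
  destruct (classic (keeps_orientation (tail a))) as [k | k];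
    [left; apply vertex_map_keeps | right; apply vertex_map_flips]; exact k.
Qed.

Lemma vertex_map_endpoint c x :
  tail (F c) = vertex_map x \/ head (F c) = vertex_map x -> tail c = x \/ head c = x.
Proof.
  destruct (vertex_map_spec x) as [Mk Mf].
  destruct (classic (keeps_orientation x)) as [k | k];
    [pose proof (Mk k) as M | pose proof (Mf k) as M]; intros [e | e].
  - left. exact (maps_onto_reflect _ M e).
  - right. apply (maps_onto_reflect (arc_rev c) M).
    unfold out_star. rewrite F_rev. exact e.
  - right. apply (maps_onto_reflect (arc_rev c) M).
    unfold in_star. rewrite F_rev. exact e.
  - left. exact (maps_onto_reflect _ M e).
Qed.

(* A second endpoint with the same image would make F a a loop, hence a itself. *)
Lemma vertex_map_inj x x' : vertex_map x = vertex_map x' -> x = x'.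
Proof.
  intro e. destruct (out_star_inhabited hG x) as [a ha]. unfold out_star in ha. subst x.
  assert (hend : tail (F a) = vertex_map x' \/ head (F a) = vertex_map x').
  { rewrite <- e. destruct (vertex_map_ends a) as [[t _] | [_ h]]; auto. }
  destruct (vertex_map_endpoint _ _ hend) as [t | h]; [exact t|]. subst x'.
  assert (loop : arc_rev (F a) = F a).
  { destruct (vertex_map_ends a) as [[t h] | [t h]]; apply arc_eq;
      [change (head (F a) = tail (F a)) | change (tail (F a) = head (F a))
      | change (head (F a) = tail (F a)) | change (tail (F a) = head (F a))];
      congruence. }
  rewrite <- F_rev in loop. symmetry. exact (arc_rev_fixed (F_inj loop)).
Qed.

Lemma arc_bijection_graph_iso : no_isolated H -> graph_iso G H.
Proof.
  intro hH.
  assert (surj : forall u, exists x, vertex_map x = u).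
  { intro u. destruct (out_star_inhabited hH u) as [b hb]. destruct (F_surj b) as [a <-].
    destruct (vertex_map_ends a) as [[t _] | [t _]];
      [exists (tail a) | exists (head a)]; rewrite <- t; exact hb. }
  destruct (choice _ surj) as [psi Hpsi].
  exists vertex_map. split.
  - exists psi. split; [intro x; apply vertex_map_inj, Hpsi | exact Hpsi].
  - intros v w. split.
    + intro h. set (a := exist _ (v, w) h : arc G).
      pose proof (proj2_sig (F a)) as hF. change (adj H (tail (F a)) (head (F a))) in hF.
      destruct (vertex_map_ends a) as [[t hd] | [t hd]]; rewrite t, hd in hF;
        [exact hF | apply adj_sym; exact hF].
    + intro h. destruct (F_surj (exist _ (vertex_map v, vertex_map w) h)) as [a ea].
      pose proof (proj2_sig a) as ha. change (adj G (tail a) (head a)) in ha.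
      destruct (vertex_map_ends a) as [[t hd] | [t hd]]; rewrite ea in t, hd;
        apply vertex_map_inj in t; apply vertex_map_inj in hd; subst;
        [exact ha | apply adj_sym; exact ha].
Qed.

End ArcBijection.

Definition minimal {T : Type} (le : T -> T -> Prop) (c : T) : Prop :=
  forall b, le b c -> b = c.

(* For minimal a and b, this says that a and b are the only elements strictly
   below some d; on arcs it is the order-theoretic form of [share]. *)
Definition common_cover {T : Type} (le : T -> T -> Prop) (a b : T) : Prop :=
  exists d, le a d /\ le b d /\ forall e, le e d -> e = a \/ e = b \/ e = d.

Section OrderIso.
Context {T U : Type} {leT : T -> T -> Prop} {leU : U -> U -> Prop}.
Context {f : T -> U} {g : U -> T}.
Hypothesis fg : forall b, f (g b) = b.
Hypothesis f_le : forall a b, leT a b <-> leU (f a) (f b).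

Lemma le_inverse a b : leU a b <-> leT (g a) (g b).
Proof. rewrite f_le, !fg. reflexivity. Qed.

Lemma minimal_iso c : minimal leT c -> minimal leU (f c).
Proof.
  intros m b hb. rewrite <- (fg b) in hb |- *. apply f_le in hb. now rewrite (m _ hb).
Qed.

Lemma common_cover_iso a b : common_cover leT a b -> common_cover leU (f a) (f b).
Proof.
  intros [d [ad [bd down]]]. exists (f d).
  split; [now apply f_le | split; [now apply f_le |]].
  intros e he. rewrite <- (fg e) in he |- *. apply f_le in he.
  destruct (down _ he) as [-> | [-> | ->]]; auto.
Qed.

End OrderIso.

Section BoxComplex.
Variable G : graph.

Lemma box_ext (c d : box G) :
  (forall z, fst (proj1_sig c) z <-> fst (proj1_sig d) z) ->
  (forall z, snd (proj1_sig c) z <-> snd (proj1_sig d) z) -> c = d.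
Proof.
  destruct c as [[s t] hc], d as [[s' t'] hd]; simpl. intros es et.
  assert (s = s') by (extensionality z; apply propositional_extensionality, es).
  assert (t = t') by (extensionality z; apply propositional_extensionality, et).
  subst. f_equal. apply proof_irrelevance.
Qed.

Lemma box_inv_involutive (c : box G) : box_inv (box_inv c) = c.
Proof. apply box_ext; reflexivity. Qed.

Lemma box_le_inv (c d : box G) : box_le c d <-> box_le (box_inv c) (box_inv d).
Proof. unfold box_le; simpl. tauto. Qed.

Lemma arc_cell (a : arc G) : is_box_cell G (fun z => z = tail a, fun z => z = head a).
Proof.
  split; [exists (tail a); reflexivity | split; [exists (head a); reflexivity |]].
  simpl. intros x y -> ->. exact (proj2_sig a).
Qed.

Definition arc_box (a : arc G) : box G := exist _ _ (arc_cell a).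

Lemma arc_box_inj (a b : arc G) : arc_box a = arc_box b -> a = b.
Proof.
  intro e. apply arc_eq.
  - change (fst (proj1_sig (arc_box b)) (tail a)). rewrite <- e. exact eq_refl.
  - change (snd (proj1_sig (arc_box b)) (head a)). rewrite <- e. exact eq_refl.
Qed.

Lemma box_inv_arc_box (a : arc G) : box_inv (arc_box a) = arc_box (arc_rev a).
Proof. apply box_ext; reflexivity. Qed.

Lemma arc_box_minimal (a : arc G) : minimal (@box_le G) (arc_box a).
Proof.
  intros [[s t] [[x hx] [[y hy] hst]]] [le_s le_t]; simpl in *.
  apply box_ext; simpl; intro z; split; auto.
  - intros ->. rewrite <- (le_s x hx). exact hx.
  - intros ->. rewrite <- (le_t y hy). exact hy.
Qed.

Lemma minimal_arc_box (c : box G) : minimal (@box_le G) c -> exists a, c = arc_box a.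
Proof.
  intro m. destruct c as [[s t] [[x hx] [[y hy] hst]]].
  exists (exist _ (x, y) (hst x y hx hy)). symmetry. apply m.
  split; simpl; intros z ->; assumption.
Qed.

Lemma common_cover_arc_box_tail (a b : arc G) : tail a = tail b ->
  common_cover (@box_le G) (arc_box a) (arc_box b).
Proof.
  intro e.
  assert (cell : is_box_cell G (fun z => z = tail a, fun z => z = head a \/ z = head b)).
  { split; [exists (tail a); reflexivity | split; [exists (head a); now left |]].
    simpl. intros x y -> [-> | ->]; [exact (proj2_sig a) | rewrite e; exact (proj2_sig b)]. }
  exists (exist _ _ cell). split; [|split].
  - split; simpl; intros z ->; auto.
  - split; simpl; intros z ->; auto.
  - intros [[s t] [[x hx] [[y hy] hst]]] [le_s le_t]; simpl in *.
    assert (hs : forall z, s z <-> z = tail a).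
    { intro z. split; [apply le_s | intros ->; rewrite <- (le_s x hx); exact hx]. }
    destruct (classic (t (head a))) as [ta | ta], (classic (t (head b))) as [tb | tb].
    + right; right. apply box_ext; simpl; [exact hs |].
      intro z. split; [apply le_t | intros [-> | ->]; assumption].
    + left. apply box_ext; simpl; [exact hs |].
      intro z. split; [| now intros ->].
      intro hz. destruct (le_t z hz) as [-> | ->]; [reflexivity | contradiction].
    + right; left. apply box_ext; simpl; [intro z; rewrite hs, e; reflexivity |].
      intro z. split; [| now intros ->].
      intro hz. destruct (le_t z hz) as [-> | ->]; [contradiction | reflexivity].
    + exfalso. destruct (le_t y hy) as [-> | ->]; contradiction.
Qed.

Lemma common_cover_arc_box (a b : arc G) :
  common_cover (@box_le G) (arc_box a) (arc_box b) <-> share a b.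
Proof.
  split.
  - intros [d [[a_s a_t] [[b_s b_t] down]]]. apply NNPP. intro ns. unfold share in ns.
    assert (hab : adj G (tail a) (head b)).
    { apply (proj2 (proj2 (proj2_sig d))); [apply a_s | apply b_t]; exact eq_refl. }
    set (c := exist _ (tail a, head b) hab : arc G).
    destruct (down (arc_box c)) as [e | [e | e]].
    + split; simpl; intros z hz; rewrite hz; [apply a_s | apply b_t]; exact eq_refl.
    + apply ns. right. rewrite <- (arc_box_inj e). reflexivity.
    + apply ns. left. rewrite <- (arc_box_inj e). reflexivity.
    + pose proof (b_s (tail b) eq_refl) as h. rewrite <- e in h.
      apply ns. left. symmetry. exact h.
  - intros [e | e]; [exact (common_cover_arc_box_tail a b e) |].
    pose proof (common_cover_arc_box_tail (arc_rev a) (arc_rev b) e) as h.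
    apply (common_cover_iso box_inv_involutive box_le_inv) in h.
    rewrite !box_inv_arc_box, !arc_rev_involutive in h. exact h.
Qed.

End BoxComplex.

Lemma z2_poset_iso_arc_bijection (G H : graph) : z2_poset_iso G H ->
  exists F : arc G -> arc H,
    (forall a b, F a = F b -> a = b) /\ (forall b, exists a, F a = b) /\
    (forall a, F (arc_rev a) = arc_rev (F a)) /\
    (forall a b, share a b <-> share (F a) (F b)).
Proof.
  intros [f [[g [gf fg]] [f_le f_inv]]].
  pose proof (le_inverse fg f_le) as g_le.
  destruct (choice (fun a b => f (arc_box a) = arc_box b)) as [F HF].
  { intro a. apply minimal_arc_box, (minimal_iso fg f_le), arc_box_minimal. }
  assert (HG : forall b, exists a, g (arc_box b) = arc_box a).
  { intro b. apply minimal_arc_box, (minimal_iso gf g_le), arc_box_minimal. }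
  exists F. split; [|split; [|split]].
  - intros a b e. apply arc_box_inj.
    rewrite <- (gf (arc_box a)), <- (gf (arc_box b)), !HF, e. reflexivity.
  - intro b. destruct (HG b) as [a ha]. exists a. apply arc_box_inj.
    rewrite <- HF, <- ha, fg. reflexivity.
  - intro a. apply arc_box_inj.
    rewrite <- HF, <- box_inv_arc_box, f_inv, HF, box_inv_arc_box. reflexivity.
  - intros a b. rewrite <- !common_cover_arc_box, <- !HF. split.
    + apply (common_cover_iso fg f_le).
    + intro h. apply (common_cover_iso gf g_le) in h. rewrite !gf in h. exact h.
Qed.

Section BoxTransport.
Context {G H : graph} {phi : V G -> V H} {psi : V H -> V G}.
Hypothesis psi_phi : forall x, psi (phi x) = x.
Hypothesis phi_psi : forall u, phi (psi u) = u.
Hypothesis phi_adj : forall v w, adj G v w <-> adj H (phi v) (phi w).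

Lemma box_image_cell (c : box G) :
  is_box_cell H (fun u => fst (proj1_sig c) (psi u), fun u => snd (proj1_sig c) (psi u)).
Proof.
  destruct c as [[s t] [[x hx] [[y hy] hst]]]; simpl.
  split; [exists (phi x) | split; [exists (phi y) |]]; simpl; rewrite ?psi_phi; trivial.
  intros u w hu hw. rewrite <- (phi_psi u), <- (phi_psi w). apply phi_adj, hst; assumption.
Qed.

Definition box_image (c : box G) : box H := exist _ _ (box_image_cell c).

End BoxTransport.

Lemma graph_iso_z2_poset_iso (G H : graph) : graph_iso G H -> z2_poset_iso G H.
Proof.
  intros [phi [[psi [psi_phi phi_psi]] phi_adj]].
  assert (psi_adj : forall u w, adj H u w <-> adj G (psi u) (psi w)).
  { intros u w. rewrite phi_adj, !phi_psi. reflexivity. }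
  exists (box_image psi_phi phi_psi phi_adj). split; [|split].
  - exists (box_image phi_psi psi_phi psi_adj).
    split; intro c; apply box_ext; simpl; intro z; rewrite ?psi_phi, ?phi_psi; reflexivity.
  - intros c d. unfold box_le; simpl. split.
    + intros [hs ht]. split; auto.
    + intros [hs ht]. split; intro x; rewrite <- (psi_phi x); auto.
  - intro c. apply box_ext; reflexivity.
Qed.

Theorem theorem1p1 (G H : graph) (hG : no_isolated G) (hH : no_isolated H) :
  graph_iso G H <-> z2_poset_iso G H.
Proof.
  split; [apply graph_iso_z2_poset_iso |].
  intro iso.
  destruct (z2_poset_iso_arc_bijection iso) as [F [F_inj [F_surj [F_rev F_share]]]].
  exact (arc_bijection_graph_iso F F_inj F_surj F_rev F_share hG hH).
Qed.
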